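(* Let $(X,\mathcal{A})$ be a measurable space, $f\in\mathcal{F}^{(X,\mathcal{A})}$, $\oplus:[0,\infty]^2\to[0,\infty]$ a pseudo-addition, and $m\in\mathcal{M}^{(X,\mathcal{A})}$ a monotone measure such that $\mathbf{I}_\oplus(m,\varphi_1(f))$ is finite, where $\varphi_1,\varphi_2:[0,\infty)\to[0,\infty)$ are continuous strictly increasing functions. If $\varphi_1^{-1}(\varphi_1(a)\oplus c)\le\varphi_2^{-1}(\varphi_2(a)\oplus c)$ for all $a\in[0,\infty)$, $c\in[0,\infty]$, then \[ \varphi_1^{-1}\big(\mathbf{I}_\oplus(m,\varphi_1(f))\big)\ \le\ \varphi_2^{-1}\big(\mathbf{I}_\oplus(m,\varphi_2(f))\big). \]
   Context: A monotone measure on $(X,\mathcal{A})$ is $m:\mathcal{A}\to[0,\infty]$ with $m(\emptyset)=0$, $m(X)>0$, and $m(A)\le m(B)$ for $A\subseteq B$; $\mathcal{M}^{(X,\mathcal{A})}$ is the set of these; $\mathcal{F}^{(X,\mathcal{A})}$ is the set of $\mathcal{A}$-measurable $f:X\to[0,\infty]$. A pseudo-addition is a map $\oplus:[0,\infty]^2\to[0,\infty]$ that is continuous, associative, non-decreasing and has $0$ as neutral element. $\mathbf{I}_\oplus(m,f)=\inf\{t\oplus m(\{f>t\}) : t\in(0,\infty]\}$. *)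

From HB Require Import structures.
From mathcomp Require Import all_boot all_order all_algebra.
From mathcomp Require Import all_classical all_reals all_analysis.
From mathcomp Require Import measurable_realfun.
Set Implicit Arguments. Unset Strict Implicit. Unset Printing Implicit Defensive.
Import Order.TTheory GRing.Theory Num.Theory.
Import numFieldNormedType.Exports.
Local Open Scope classical_set_scope.
Local Open Scope ring_scope.
Local Open Scope ereal_scope.

Section Defs.
Variable R : realType.

Definition monotone_measure d (X : measurableType d) (m : set X -> \bar R) :=
  [/\ m set0 = 0, 0 < m setT,
      (forall A, measurable A -> 0 <= m A) &
      (forall A B, measurable A -> measurable B -> A `<=` B -> m A <= m B)].

Definition pseudo_addition (op : \bar R -> \bar R -> \bar R) :=
  [/\ (forall x y, 0 <= x -> 0 <= y -> 0 <= op x y),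
      {within [set p : \bar R * \bar R | 0 <= p.1 /\ 0 <= p.2],
         continuous (fun p => op p.1 p.2)},
      (forall x y z, 0 <= x -> 0 <= y -> 0 <= z -> op x (op y z) = op (op x y) z),
      (forall x x' y y', 0 <= x -> 0 <= y -> x <= x' -> y <= y' ->
          op x y <= op x' y') &
      (forall x, 0 <= x -> op 0 x = x /\ op x 0 = x)].

Definition Iop d (X : measurableType d) (op : \bar R -> \bar R -> \bar R)
  (m : set X -> \bar R) (f : X -> \bar R) : \bar R :=
  ereal_inf [set op t (m [set x | t < f x]) | t in [set t : \bar R | 0 < t]].

Definition ext_fun (phi : R -> R) (x : \bar R) : \bar R :=
  match x with
  | r%:E => (phi r)%:E
  | +oo => +oo
  | -oo => -oo
  end.

Definition ext_inv (phi : R -> R) (y : \bar R) : \bar R :=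
  match y with
  | r%:E => (xget 0%R [set x : R | (0 <= x)%R /\ phi x = r])%:E
  | +oo => +oo
  | -oo => -oo
  end.

End Defs.

From HB Require Import structures.
From mathcomp Require Import all_boot all_order all_algebra.
From mathcomp Require Import all_classical all_reals all_analysis.
From mathcomp Require Import measurable_realfun.
Import Order.TTheory GRing.Theory Num.Theory.
Import numFieldNormedType.Exports.
Local Open Scope classical_set_scope.
Local Open Scope ring_scope.
Local Open Scope ereal_scope.

(* Let L := phi1^-1(I(m, phi1 f)).  As phi2^-1 is upper adjoint to phi2, it suffices
   to show phi2(L) <= t (+) m{phi2 f > t} for every t > 0.  For t = +oo the right side
   is +oo; otherwise t = phi2(a) with a > 0, and {phi2 f > phi2 a} = {f > a} =
   {phi1 f > phi1 a} =: A.  The term phi1(a) (+) m(A) of the infimum I(m, phi1 f) gives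
   L <= phi1^-1(phi1 a (+) m(A)) <= phi2^-1(phi2 a (+) m(A)), and applying phi2 ends
   the argument. *)

Section ExtendedInverse.
Context {R : realType} {phi : R -> R}.
Hypothesis phi_inc : forall x y : R, (0 <= x)%R -> (x < y)%R -> (phi x < phi y)%R.
Hypothesis phi_ge0 : forall x : R, (0 <= x)%R -> (0 <= phi x)%R.
Hypothesis phi_surj :
  forall y : R, (0 <= y)%R -> exists2 x : R, (0 <= x)%R & phi x = y.

Lemma ler_phi x y : (0 <= x)%R -> (0 <= y)%R -> (phi x <= phi y)%R = (x <= y)%R.
Proof.
move=> x0 y0; apply/idP/idP => [|].
  by apply: contraTT; rewrite -!ltNge; exact: phi_inc.
by rewrite le_eqVlt => /predU1P[->//|/(phi_inc _ _ x0)/ltW].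
Qed.

Lemma ltr_phi x y : (0 <= x)%R -> (0 <= y)%R -> (phi x < phi y)%R = (x < y)%R.
Proof. by move=> x0 y0; rewrite !ltNge ler_phi. Qed.

Lemma phi0 : phi 0%R = 0%R.
Proof.
have [z z0 phiz] := phi_surj 0%R (lexx _).
apply/eqP; rewrite eq_le phi_ge0 ?lexx // andbT.
by rewrite -[leRHS]phiz ler_phi ?lexx.
Qed.

Lemma phi_gt0 x : (0 <= x)%R -> (0 < phi x)%R = (0 < x)%R.
Proof. by move=> x0; rewrite -{1}phi0 ltr_phi. Qed.

Lemma ext_inv_fin r : (0 <= r)%R ->
  exists2 x : R, (0 <= x)%R /\ phi x = r & ext_inv phi r%:E = x%:E.
Proof.
move=> r0; have [x x0 phix] := phi_surj r r0.
have [y0 phiy] :=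
  xgetPex 0%R (ex_intro [set x : R | (0 <= x)%R /\ phi x = r] x (conj x0 phix)).
by exists (xget 0%R [set x : R | (0 <= x)%R /\ phi x = r]).
Qed.

Lemma le_ext_inv x y : (0 <= x)%R -> 0 <= y ->
  (x%:E <= ext_inv phi y) = ((phi x)%:E <= y).
Proof.
move=> x0; case: y => [r| |] // r0; last by rewrite !leey.
have [z [z0 <-] ->] := ext_inv_fin _ r0.
by rewrite !lee_fin ler_phi.
Qed.

Lemma ext_inv_nondecreasing y1 y2 :
  0 <= y1 -> y1 <= y2 -> ext_inv phi y1 <= ext_inv phi y2.
Proof.
case: y1 => [r| |] // r0; last by rewrite leye_eq => /eqP ->.
have [z [z0 phiz] ->] := ext_inv_fin _ r0.
by move=> y12; rewrite le_ext_inv ?(le_trans r0) // phiz.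
Qed.

End ExtendedInverse.

Lemma ext_fun_level_set {R : realType} {T : Type} {f : T -> \bar R} {phi : R -> R} :
  (forall x, 0 <= f x) ->
  (forall x y : R, (0 <= x)%R -> (x < y)%R -> (phi x < phi y)%R) ->
  forall a : R, (0 <= a)%R ->
  [set x | (phi a)%:E < ext_fun phi (f x)] = [set x | a%:E < f x].
Proof.
move=> f0 phi_inc a a0; apply/seteqP; split => x /=;
  case: (f x) (f0 x) => [r| |] //= r0; rewrite ?ltry // !lte_fin ltr_phi //.
Qed.

Lemma measurable_ext_fun_level_set {R : realType} {d : measure_display}
    {X : measurableType d} {f : X -> \bar R} {phi : R -> R} :
  measurable_fun setT f -> (forall x, 0 <= f x) ->
  (forall x y : R, (0 <= x)%R -> (x < y)%R -> (phi x < phi y)%R) ->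
  (forall y : R, (0 <= y)%R -> exists2 x : R, (0 <= x)%R & phi x = y) ->
  forall t, 0 < t -> measurable [set x | t < ext_fun phi (f x)].
Proof.
move=> mf f0 phi_inc phi_surj [s| |] //= t0.
  have [a a0 <-] := phi_surj s (ltW t0).
  by rewrite ext_fun_level_set // -(setTI [set x | _]); exact: emeasurable_fun_o_infty.
rewrite [X in measurable X](_ : _ = set0) //.
by apply/seteqP; split => x //=; rewrite ltNge leey.
Qed.

Lemma Iop_ge0 {R : realType} {d : measure_display} {X : measurableType d}
    {op : \bar R -> \bar R -> \bar R} {m : set X -> \bar R} {g : X -> \bar R} :
  pseudo_addition op -> monotone_measure m ->
  (forall t, 0 < t -> measurable [set x | t < g x]) ->
  0 <= Iop op m g.
Proof.
move=> [op_ge0 _ _ _ _] [_ _ m_ge0 _] mg.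
by apply/ereal_infP => _ [t t0 <-]; apply: op_ge0; [exact: ltW|exact/m_ge0/mg].
Qed.

Lemma pseudo_addition_infty_l {R : realType} {op : \bar R -> \bar R -> \bar R}
    {c : \bar R} :
  pseudo_addition op -> 0 <= c -> op +oo c = +oo.
Proof.
move=> [_ _ _ op_le op0] c0; apply/eqP; rewrite -leye_eq.
by rewrite -[leLHS](op0 _ (leey _)).2; apply: op_le.
Qed.

Theorem theorem4p3 (R : realType) (d : measure_display) (X : measurableType d)
  (f : X -> \bar R) (op : \bar R -> \bar R -> \bar R) (m : set X -> \bar R)
  (phi1 phi2 : R -> R) :
  measurable_fun setT f -> (forall x, 0 <= f x) ->
  pseudo_addition op ->
  monotone_measure m ->
  (* phi1, phi2 : [0,oo) -> [0,oo) continuous, strictly increasing, bijective *)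
  {within [set x : R | (0 <= x)%R], continuous phi1} ->
  {within [set x : R | (0 <= x)%R], continuous phi2} ->
  (forall x y : R, (0 <= x)%R -> (x < y)%R -> (phi1 x < phi1 y)%R) ->
  (forall x y : R, (0 <= x)%R -> (x < y)%R -> (phi2 x < phi2 y)%R) ->
  (forall x : R, (0 <= x)%R -> (0 <= phi1 x)%R) ->
  (forall x : R, (0 <= x)%R -> (0 <= phi2 x)%R) ->
  (forall y : R, (0 <= y)%R -> exists2 x : R, (0 <= x)%R & phi1 x = y) ->
  (forall y : R, (0 <= y)%R -> exists2 x : R, (0 <= x)%R & phi2 x = y) ->
  Iop op m (fun x => ext_fun phi1 (f x)) \is a fin_num ->
  (forall (a : R) (c : \bar R), (0 <= a)%R -> 0 <= c ->
     ext_inv phi1 (op (phi1 a)%:E c) <= ext_inv phi2 (op (phi2 a)%:E c)) ->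
  ext_inv phi1 (Iop op m (fun x => ext_fun phi1 (f x)))
    <= ext_inv phi2 (Iop op m (fun x => ext_fun phi2 (f x))).
Proof.
move=> mf f0 hop hm _ _ inc1 inc2 ge01 ge02 surj1 surj2 fin1 hphi.
have meas1 := measurable_ext_fun_level_set mf f0 inc1 surj1.
have meas2 := measurable_ext_fun_level_set mf f0 inc2 surj2.
have [_ _ m_ge0 _] := hm.
have I1_ge0 := Iop_ge0 hop hm meas1; have I2_ge0 := Iop_ge0 hop hm meas2.
have [L [L0 _] I1E] := ext_inv_fin surj1 _ (fine_ge0 I1_ge0).
rewrite -[X in ext_inv phi1 X](fineK fin1) I1E.
rewrite le_ext_inv //; apply/ereal_infP => _ [[s| |] /= t0 <-] //; last first.
  by rewrite pseudo_addition_infty_l ?leey //; exact/m_ge0/meas2.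
have [a a0 phia] := surj2 s (ltW t0); rewrite -phia in t0 *.
rewrite ext_fun_level_set // -(ext_fun_level_set f0 inc1 _ a0).
have phi1a_gt0 : 0 < (phi1 a)%:E.
  by rewrite lte_fin phi_gt0 // -(phi_gt0 inc2 ge02 surj2).
set c := m _; have c_ge0 : 0 <= c := m_ge0 _ (meas1 _ phi1a_gt0).
have [op_ge0 _ _ _ _] := hop.
rewrite -(le_ext_inv inc2 surj2) ?op_ge0 ?lee_fin ?ge02 //.
apply: (le_trans _ (hphi _ _ a0 c_ge0)).
rewrite -I1E fineK //; apply: ext_inv_nondecreasing => //.
by apply: ereal_inf_lbound; exists (phi1 a)%:E.
Qed.
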